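(* Let $\mathbf X=\{X(\tilde r)\}_{\tilde r\in\mathbb N_0^d}$ be an $\mathbf F$-supermartingale, $\tilde s\in\mathbb N_0^d$, and $\tilde T\in\mathcal A(\tilde s)$. Then $\{X(\tilde T(t))\}_{t\in\mathbb N_0}$ is an $\mathbf F(\tilde T)$-supermartingale.
   Context: $(\Omega,\mathcal F,\mathbb P)$ complete; $\mathbf F=\{\mathcal F(\tilde s)\}_{\tilde s\in\mathbb N_0^d}$ satisfies (F1) monotonicity in the componentwise order, (F2) $\mathcal F(\tilde 0)$ contains all null sets, (F4) $\mathcal F(\tilde s),\mathcal F(\tilde r)$ conditionally independent given $\mathcal F(\tilde s\wedge\tilde r)$. $\mathbf X$ is an $\mathbf F$-supermartingale if each $X(\tilde s)$ is integrable, $\mathcal F(\tilde s)$-measurable, and $\mathbb E[X(\tilde r)\mid\mathcal F(\tilde s)]\le X(\tilde s)$ a.s. for $\tilde s\le\tilde r$. An allocation strategy for $\tilde s$ is an $\mathbb N_0^d$-valued $\{\tilde T(t)\}_{t\in\mathbb N_0}$ with $\tilde T(0)=\tilde s$, $\tilde T(t+1)=\tilde T(t)+\tilde e_j$ for some $j$ ($\tilde e_j$ unit vectors), and $\{\tilde T(t+1)=\tilde T(t)+\tilde e_j,\ \tilde T(t)=\tilde r\}\in\mathcal F(\tilde r)$; $\mathcal A(\tilde s)$ is their set. For a stopping point $\tilde\nu$ (i.e. $\{\tilde\nu=\tilde r\}\in\mathcal F(\tilde r)$ for all $\tilde r$), $\mathcal F(\tilde\nu):=\{A:A\cap\{\tilde\nu=\tilde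 r\}\in\mathcal F(\tilde r)\ \forall\tilde r\}$; $\mathbf F(\tilde T):=\{\mathcal F(\tilde T(t))\}_{t\in\mathbb N_0}$. *)

From HB Require Import structures.
From mathcomp Require Import all_boot all_order all_algebra.
From mathcomp Require Import all_classical all_reals all_analysis.
Set Implicit Arguments. Unset Strict Implicit. Unset Printing Implicit Defensive.
Import Order.TTheory GRing.Theory Num.Theory.
Local Open Scope classical_set_scope.
Local Open Scope ring_scope.

Section Defs.
Context {dT : measure_display} {T : measurableType dT} {R : realType}.
Variable P : probability T R.

Definition sub_sigma_algebra (G : set (set T)) : Prop :=
  sigma_algebra setT G /\ (forall A, G A -> measurable A).

Definition measurable_wrt (G : set (set T)) (f : T -> R) : Prop :=
  forall B : set R, measurable B -> G (f @^-1` B).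

Definition is_cond_exp (G : set (set T)) (Y Z : T -> R) : Prop :=
  [/\ measurable_wrt G Z, P.-integrable setT (EFin \o Z) &
      forall A, G A -> (\int[P]_(x in A) (Z x)%:E = \int[P]_(x in A) (Y x)%:E)%E].

Definition ind (A : set T) : T -> R := fun x => if `[< A x >] then 1 else 0.

Definition cond_indep (G1 G2 H : set (set T)) : Prop :=
  forall A B, G1 A -> G2 B ->
  forall ZA ZB ZAB, is_cond_exp H (ind A) ZA -> is_cond_exp H (ind B) ZB ->
    is_cond_exp H (ind (A `&` B)) ZAB ->
    {ae P, forall x, ZAB x = ZA x * ZB x}.

Definition supermartingale (I : Type) (le : I -> I -> Prop)
    (F : I -> set (set T)) (X : I -> T -> R) : Prop :=
  [/\ (forall i, P.-integrable setT (EFin \o X i)),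
      (forall i, measurable_wrt (F i) (X i)) &
      (forall i j, le i j -> forall Z, is_cond_exp (F i) (X j) Z ->
         {ae P, forall x, Z x <= X i x})].
End Defs.

Definition mindex (d : nat) := 'I_d -> nat.
Definition mle (d : nat) (s r : mindex d) : Prop := forall i, (s i <= r i)%N.
Definition mmeet (d : nat) (s r : mindex d) : mindex d := fun i => minn (s i) (r i).
Definition mindex0 (d : nat) : mindex d := fun _ => 0%N.
Definition unitv (d : nat) (j : 'I_d) : mindex d := fun i => nat_of_bool (i == j).
Definition madd (d : nat) (s r : mindex d) : mindex d := fun i => (s i + r i)%N.

Definition mfiltration {dT : measure_display} {T : measurableType dT} {R : realType}
  (P : probability T R) (d : nat) (F : mindex d -> set (set T)) : Prop :=
  [/\ (forall s, sub_sigma_algebra (F s)),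
      (* F1 *) (forall s r, mle s r -> F s `<=` F r),
      (* F2 *) (forall N, P.-negligible N -> F (@mindex0 d) N) &
      (* F4 *) (forall s r, cond_indep P (F s) (F r) (F (mmeet s r)))].

Definition allocation {dT : measure_display} {T : measurableType dT} (d : nat)
  (F : mindex d -> set (set T)) (s : mindex d) (Tt : nat -> T -> mindex d) : Prop :=
  [/\ (forall w, Tt 0%N w = s),
      (forall t w, exists j, Tt t.+1 w = madd (Tt t w) (unitv j)) &
      (forall t j r, F r [set w | Tt t.+1 w = madd (Tt t w) (unitv j) /\ Tt t w = r])].

Definition stopped_sigma {T : Type} (d : nat) (F : mindex d -> set (set T))
  (nu : T -> mindex d) : set (set T) :=
  [set A | forall r, F r (A `&` [set w | nu w = r])].

From Pilot Require Import Defs.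
From HB Require Import structures.
From mathcomp Require Import all_boot all_order all_algebra.
From mathcomp Require Import all_classical all_reals all_analysis.
From mathcomp Require Import measurable_realfun.
Import Order.TTheory GRing.Theory Num.Theory.
Local Open Scope classical_set_scope.
Local Open Scope ring_scope.

(* A set A of F(T t) splits into finitely many pieces
   A ∩ {T t = r, T (t+1) = r + e_j}, finitely many because T t is bounded by
   max s + t.  Each piece lies in F r, since the direction of the next step is
   decided in F r, and on it X (T (t+1)) = X (r + e_j) and X (T t) = X r; the
   supermartingale property of X between r and r + e_j thus gives
   ∫_A X (T (t+1)) <= ∫_A X (T t).  As F (T t) grows with t, iterating yields
   ∫_A X (T u) <= ∫_A X (T t) for A in F (T t) and t <= u, and this integral
   inequality between F (T t)-measurable functions forces every version of
   E[X (T u) | F (T t)] below X (T t) almost surely. *)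

Definition sigma_id {T : Type} (G : set (set T)) : T -> g_sigma_algebraType G :=
  id.

Section sub_sigma_algebra.
Context {dT : measure_display} {T : measurableType dT} {R : realType}.
Context {G : set (set T)}.
Hypothesis G_sub : Defs.sub_sigma_algebra G.

Lemma sub_sigma_algebraE : G.-sigma.-measurable = G.
Proof. by apply: measurable_g_measurableTypeE; case: G_sub. Qed.

Lemma sub_sigma_algebra_measurable {A} : G A -> measurable A.
Proof. by case: G_sub => _; apply. Qed.

Lemma sub_sigma_algebra0 : G set0.
Proof. by rewrite -sub_sigma_algebraE. Qed.

Lemma sub_sigma_algebraI {A B} : G A -> G B -> G (A `&` B).
Proof. by rewrite -sub_sigma_algebraE; exact: measurableI. Qed.

Lemma sub_sigma_algebraD {A B} : G A -> G B -> G (A `\` B).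
Proof. by rewrite -sub_sigma_algebraE; exact: measurableD. Qed.

Lemma sub_sigma_algebra_bigcup (A : (set T)^nat) :
  (forall n, G (A n)) -> G (\bigcup_n A n).
Proof. by rewrite -sub_sigma_algebraE; exact: bigcupT_measurable. Qed.

Lemma sub_sigma_algebra_fin_bigcup (I : finType) (A : I -> set T) :
  (forall i, G (A i)) -> G (\bigcup_(i in [set: I]) A i).
Proof.
rewrite -sub_sigma_algebraE => GA.
by apply: fin_bigcup_measurable => //; exact: finite_finset.
Qed.

Lemma measurable_sigma_id : measurable_fun [set: T] (sigma_id G).
Proof.
move=> _ A; rewrite sub_sigma_algebraE setTI.
exact: sub_sigma_algebra_measurable.
Qed.

Lemma measurable_wrt_sigma {f : T -> R} :
  measurable_wrt G f -> measurable_fun [set: g_sigma_algebraType G] f.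
Proof. by move=> Gf _ B mB; rewrite setTI sub_sigma_algebraE; exact: Gf. Qed.

End sub_sigma_algebra.

Section integral_ae.
Context {dT : measure_display} {T : measurableType dT} {R : realType}.
Variable mu : {measure set T -> \bar R}.
Local Open Scope ereal_scope.

Lemma le_integral_ae (D : set T) (f g : T -> R) : measurable D ->
  mu.-integrable D (EFin \o f) -> mu.-integrable D (EFin \o g) ->
  {ae mu, forall x, f x <= g x}%R ->
  \int[mu]_(x in D) (f x)%:E <= \int[mu]_(x in D) (g x)%:E.
Proof.
move=> mD intf intg [N [mN muN0 fgN]].
rewrite (negligible_integral mN mD intf muN0).
rewrite [leRHS](negligible_integral mN mD intg muN0).
have mDN : measurable (D `\` N) by exact: measurableD.
apply: le_integral => //; [exact: integrableS intf|exact: integrableS intg|].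
move=> x /set_mem[_ Nx]; rewrite lee_fin.
by apply: contrapT => fgx; apply: Nx; exact: fgN.
Qed.

End integral_ae.

Section conditional_expectation.
Context {dT : measure_display} {T : measurableType dT} {R : realType}.
Variable P : probability T R.
Context {G : set (set T)}.
Hypothesis G_sub : Defs.sub_sigma_algebra G.

HB.instance Definition _ :=
  isMeasurableFun.Build _ _ _ _ (sigma_id G) (measurable_sigma_id G_sub).

(* A version of E[Y | G] is the Radon-Nikodym derivative, on (T, G), of the
   image of the charge Y.P under the identity map (T, F) -> (T, G). *)
Lemma cond_exp_exists {Y : T -> R} : P.-integrable setT (EFin \o Y) ->
  exists Z, is_cond_exp P G Y Z.
Proof.
move=> intY; have mid := measurable_sigma_id G_sub.
pose mu := distribution P (sigma_id G).
(* The charge structure of a pushforward depends on the measurability proof,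
   hence cannot be inferred and is named explicitly. *)
pose nu := measure_function_pushforward__canonical__charge_Charge
  (induced_charge intY) mid.
have numu : nu `<< mu.
  apply: (dominates_pushforward mid).
  apply/null_content_dominatesP => A mA PA0; apply: null_set_integral => //.
  exact: measurable_funTS (measurable_int P intY).
pose f := Radon_Nikodym nu mu.
have intf : mu.-integrable setT f by exact: Radon_Nikodym_integrable.
have mf : measurable_fun setT f := measurable_int mu intf.
have fK : EFin \o (fine \o f) = f.
  by apply/funext => x /=; rewrite fineK // Radon_Nikodym_fin_num.
have intfP : P.-integrable [set: T] (f \o sigma_id G).
  apply/integrableP; split; first exact: measurableT_comp mf mid.
  case/integrableP: intf => _; rewrite ge0_integral_pushforward //.
  exact: measurableT_comp.
exists (fine \o f); split.
- move=> B mB; rewrite -(sub_sigma_algebraE G_sub) -[X in _ X]setTI.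
  by apply: measurableT_comp => //; exact: fine_measurable.
- by rewrite fK.
- move=> A GA; rewrite -/(comp _ _) fK.
  have mA : G.-sigma.-measurable A by rewrite (sub_sigma_algebraE G_sub).
  rewrite -[LHS](integral_pushforward mid mf) //; last first.
    by apply: integrableS intfP => //; rewrite -[X in _ X]setTI; apply: (mid).
  by rewrite -(Radon_Nikodym_integral numu mA).
Qed.

Lemma integral_le_of_cond_exp_le {Y W : T -> R} :
  P.-integrable setT (EFin \o Y) -> P.-integrable setT (EFin \o W) ->
  (forall Z, is_cond_exp P G Y Z -> {ae P, forall x, Z x <= W x}) ->
  forall A, G A ->
  (\int[P]_(x in A) (Y x)%:E <= \int[P]_(x in A) (W x)%:E)%E.
Proof.
move=> intY intW YW A GA.
have [Z EZ] := cond_exp_exists intY; have [_ intZ ZY] := EZ.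
rewrite -ZY //.
have mA := sub_sigma_algebra_measurable G_sub GA.
apply: le_integral_ae (YW Z EZ) => //.
  exact: integrableS intZ.
exact: integrableS intW.
Qed.

Lemma ae_le_of_integral_le {Z W : T -> R} :
  measurable_wrt G Z -> measurable_wrt G W ->
  P.-integrable setT (EFin \o Z) -> P.-integrable setT (EFin \o W) ->
  (forall A, G A ->
    (\int[P]_(x in A) (Z x)%:E <= \int[P]_(x in A) (W x)%:E)%E) ->
  {ae P, forall x, Z x <= W x}.
Proof.
move=> GZ GW intZ intW ZW.
pose A := [set x | W x < Z x].
have GA : G A.
  rewrite -(sub_sigma_algebraE G_sub).
  have mtrue : measurable [set true] by [].
  have := measurable_fun_ltr (measurable_wrt_sigma G_sub GW)
    (measurable_wrt_sigma G_sub GZ) measurableT mtrue.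
  by rewrite setTI.
have mA := sub_sigma_algebra_measurable G_sub GA.
have intZA : P.-integrable A (EFin \o Z) by exact: integrableS intZ.
have intWA : P.-integrable A (EFin \o W) by exact: integrableS intW.
have ZW_ge0 x : A x -> (0 <= (Z x)%:E - (W x)%:E)%E.
  by move=> Ax; rewrite -EFinB lee_fin subr_ge0 ltW.
have ZW0 : (\int[P]_(x in A) ((Z x)%:E - (W x)%:E) = 0)%E.
  apply/eqP; rewrite eq_le integral_ge0 // andbT.
  by rewrite integralB_EFin // sube_le0 ZW.
have mZW : measurable_fun A (fun x => (Z x)%:E - (W x)%:E)%E.
  by apply: emeasurable_funB; [exact: measurable_int intZA|
                               exact: measurable_int intWA].
have : (\int[P]_(x in A) `|(Z x)%:E - (W x)%:E| = 0)%E.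
  rewrite -[RHS]ZW0; apply: eq_integral => x /set_mem Ax.
  by rewrite gee0_abs ?ZW_ge0.
move/(ae_eq_integral_abs P mA mZW); apply: filterS => x /= ZWx.
rewrite leNgt; apply/negP => Ax; move/eqP: (ZWx Ax).
by rewrite -EFinB eqe subr_eq0 => /eqP ZWe; move: Ax; rewrite /A /= ZWe ltxx.
Qed.

End conditional_expectation.

Lemma integral_fin_bigcup {dT : measure_display} {T : measurableType dT}
    {R : realType} (mu : {measure set T -> \bar R}) (K : finType)
    (Q : K -> set T) (f : T -> R) :
  (forall k, measurable (Q k)) -> trivIset setT Q ->
  measurable_fun (\bigcup_(k in [set: K]) Q k) (EFin \o f) ->
  (\int[mu]_(x in \bigcup_(k in [set: K]) Q k) (f x)%:E =
   \sum_k \int[mu]_(x in Q k) (f x)%:E)%E.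
Proof.
have -> : \bigcup_(k in [set: K]) Q k = \big[setU/set0]_(k <- index_enum K) Q k.
  rewrite -bigcup_seq; congr bigcup.
  by apply/seteqP; split => k // _; rewrite /= mem_index_enum.
move=> mQ tQ mf; rewrite integral_bigsetU_EFin //; first exact: index_enum_uniq.
exact: sub_trivIset tQ.
Qed.

Definition box (d b : nat) := {ffun 'I_d -> 'I_b.+1}.

Definition of_box {d b : nat} (k : box d b) : mindex d := fun i => k i.

Lemma of_box_inj (d b : nat) : injective (@of_box d b).
Proof.
move=> k l kl; apply/ffunP => i; apply: val_inj.
exact: (congr1 (fun r => r i) kl).
Qed.

Lemma bounded_mindex_of_box {d b : nat} {r : mindex d} :
  (forall i, (r i <= b)%N) -> exists k : box d b, r = of_box k.
Proof.
move=> rb; exists [ffun i => inord (r i)].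
by apply: funext => i; rewrite /of_box ffunE inordK // ltnS.
Qed.

Section bounded_stopping_point.
Context {dT : measure_display} {T : measurableType dT} {R : realType}.
Variable P : probability T R.
Context {d : nat} {F : mindex d -> set (set T)} {nu : T -> mindex d} {b : nat}.
Hypothesis F_sub : forall r, Defs.sub_sigma_algebra (F r).
Hypothesis nu_bounded : forall w i, (nu w i <= b)%N.

Local Notation F_nu := (stopped_sigma F nu).

Lemma stopped_partition (A : set T) :
  A = \bigcup_(k in [set: box d b]) (A `&` [set w | nu w = of_box k]).
Proof.
apply/seteqP; split => [w Aw|w [k _ []//]].
by have [k nuk] := bounded_mindex_of_box (nu_bounded w); exists k.
Qed.

Lemma stopped_sigma_measurable A : F_nu A -> measurable A.
Proof.
move=> FA; rewrite (stopped_partition A).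
apply: fin_bigcup_measurable; first exact: finite_finset.
by move=> k _; apply: (sub_sigma_algebra_measurable (F_sub _)); exact: FA.
Qed.

Lemma stopped_sigma_mono (nu' : T -> mindex d) :
  (forall r r', mle r r' -> F r `<=` F r') ->
  (forall r, F r [set w | nu' w = r]) ->
  (forall w, mle (nu w) (nu' w)) -> F_nu `<=` stopped_sigma F nu'.
Proof.
move=> F_mono nu'_stopping nu_le A FA r'.
rewrite (stopped_partition A) setI_bigcupl.
apply: (sub_sigma_algebra_fin_bigcup (F_sub r')) => k.
have [kr'|kr'] := pselect (mle (of_box k) r').
  apply: (sub_sigma_algebraI (F_sub r')) (nu'_stopping r').
  exact: F_mono kr' _ (FA _).
have -> : A `&` [set w | nu w = of_box k] `&` [set w | nu' w = r'] = set0.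
  apply/seteqP; split => w // [[_ nuw] nu'w]; apply: kr'.
  by rewrite -nuw -nu'w; exact: nu_le.
exact: sub_sigma_algebra0.
Qed.

Hypothesis nu_stopping : forall r, F r [set w | nu w = r].

Lemma sub_sigma_algebra_stopped : Defs.sub_sigma_algebra F_nu.
Proof.
split; [split|exact: stopped_sigma_measurable].
- by move=> r; rewrite set0I; exact: sub_sigma_algebra0.
- move=> A FA r; rewrite setTD setIC -setDE.
  rewrite -[X in F r X]setU0 -(setDv [set w | nu w = r]) -setDIr.
  by apply: (sub_sigma_algebraD (F_sub r)) (FA r); exact: nu_stopping.
- move=> A FA r; rewrite setI_bigcupl.
  by apply: (sub_sigma_algebra_bigcup (F_sub r)) => n; exact: FA.
Qed.

Variable X : mindex d -> T -> R.
Hypothesis X_wrt : forall r, measurable_wrt (F r) (X r).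

Lemma measurable_wrt_stopped : measurable_wrt F_nu (fun w => X (nu w) w).
Proof.
move=> B mB r.
have -> : (fun w => X (nu w) w) @^-1` B `&` [set w | nu w = r] =
    X r @^-1` B `&` [set w | nu w = r].
  by apply/seteqP; split => w /= [Bw nuw]; rewrite nuw in Bw *.
by apply: (sub_sigma_algebraI (F_sub r)) (nu_stopping r); exact: X_wrt.
Qed.

Lemma measurable_fun_stopped : measurable_fun setT (fun w => X (nu w) w).
Proof.
move=> _ B mB; rewrite setTI.
by apply: stopped_sigma_measurable; exact: measurable_wrt_stopped.
Qed.

Lemma integrable_stopped : (forall r, P.-integrable setT (EFin \o X r)) ->
  P.-integrable setT (EFin \o (fun w => X (nu w) w)).
Proof.
move=> X_int.
have sum_int : P.-integrable setT
    (fun w => \sum_(k : box d b) (`|X (of_box k) w|)%:E)%E.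
  by apply: integrable_sum => // k _; apply: integrable_norm; exact: X_int.
apply: (le_integrable measurableT _ _ sum_int).
  by apply/measurable_EFinP; exact: measurable_fun_stopped.
move=> w _; have [k nuk] := bounded_mindex_of_box (nu_bounded w).
rewrite /= nuk [leRHS]gee0_abs; last by apply: sume_ge0 => l _; rewrite lee_fin.
rewrite (bigD1 k) //= -[leLHS]adde0 leeD //.
by apply: sume_ge0 => l _; rewrite lee_fin.
Qed.

End bounded_stopping_point.

Lemma mle_madd_unitv {d : nat} (r : mindex d) (j : 'I_d) :
  mle r (madd r (unitv j)).
Proof. by move=> i; rewrite /madd leq_addr. Qed.

Lemma madd_unitv_inj {d : nat} (r : mindex d) : injective (madd r \o @unitv d).
Proof.
move=> j j' /(congr1 (fun r' => r' j)); rewrite /= /madd /unitv eqxx.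
by move/addnI; case: eqP.
Qed.

Section allocation.
Context {dT : measure_display} {T : measurableType dT} {R : realType}.
Variable P : probability T R.
Context {d : nat} {F : mindex d -> set (set T)} {s : mindex d}
  {Tt : nat -> T -> mindex d}.
Hypothesis T_alloc : allocation F s Tt.

Lemma allocation_bounded t w i : (Tt t w i <= \max_(j < d) s j + t)%N.
Proof.
case: T_alloc => T0 T_step _; elim: t => [|t IH].
  by rewrite T0 addn0; exact: leq_bigmax.
have [j ->] := T_step t w; rewrite /madd addnS -addn1 leq_add //.
exact: leq_b1.
Qed.

Lemma allocation_mle t u w : (t <= u)%N -> mle (Tt t w) (Tt u w).
Proof.
case: T_alloc => _ T_step _; elim: u => [|u IH]; first by rewrite leqn0 => /eqP->.
rewrite leq_eqVlt ltnS => /predU1P[-> //|tu] i.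
have [j ->] := T_step u w; exact: leq_trans (IH tu i) (mle_madd_unitv _ j i).
Qed.

Hypothesis F_sub : forall r, Defs.sub_sigma_algebra (F r).

Lemma allocation_stopping t r : F r [set w | Tt t w = r].
Proof.
case: T_alloc => _ T_step T_pred.
have -> : [set w | Tt t w = r] = \bigcup_(j in [set: 'I_d])
    [set w | Tt t.+1 w = madd (Tt t w) (unitv j) /\ Tt t w = r].
  apply/seteqP; split => [w tw|w [j _ []//]].
  by have [j tj] := T_step t w; exists j.
exact: sub_sigma_algebra_fin_bigcup.
Qed.

Variable X : mindex d -> T -> R.
Hypothesis X_super : supermartingale P (@mle d) F X.

Local Notation X_ t := (fun w => X (Tt t w) w).

Lemma allocation_step_integral t A : stopped_sigma F (Tt t) A ->
  (\int[P]_(x in A) (X_ t.+1 x)%:E <= \int[P]_(x in A) (X_ t x)%:E)%E.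
Proof.
case: T_alloc => _ T_step T_pred; case: X_super => X_int X_wrt X_le FA.
pose Q (kj : box d (\max_(j < d) s j + t) * 'I_d) :=
  A `&` [set w | Tt t w = of_box kj.1] `&`
  [set w | Tt t.+1 w = madd (Tt t w) (unitv kj.2) /\ Tt t w = of_box kj.1].
have FQ kj : F (of_box kj.1) (Q kj).
  by apply: (sub_sigma_algebraI (F_sub _)) (T_pred _ _ _); exact: FA.
have mQ kj : measurable (Q kj).
  by apply: (sub_sigma_algebra_measurable (F_sub _)); exact: FQ.
have AQ : A = \bigcup_(kj in [set: _]) Q kj.
  apply/seteqP; split => [w Aw|w [kj _ [[]]]//].
  have [k tk] := bounded_mindex_of_box (allocation_bounded t w).
  by have [j tj] := T_step t w; exists (k, j).
have tQ : trivIset setT Q.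
  apply/trivIsetP => -[k j] [k' j'] _ _ kjk'j'; apply/seteqP; split => // w.
  move=> [[_ [tj tk]] [_ [tj' tk']]]; move/eqP: kjk'j'; apply.
  have kk' : k = k' by apply: of_box_inj; rewrite -tk -tk'.
  rewrite kk'; congr pair; apply: (@madd_unitv_inj _ (Tt t w)).
  by rewrite /= -tj -tj'.
have mX u : measurable_fun A (EFin \o X_ u).
  apply/measurable_EFinP; apply: measurable_funTS.
  exact: measurable_fun_stopped F_sub (allocation_bounded u)
    (allocation_stopping u) _ X_wrt.
rewrite AQ in mX *.
rewrite !integral_fin_bigcup //; apply: lee_sum => -[k j] _.
have -> : (\int[P]_(x in Q (k, j)) (X_ t.+1 x)%:E =
    \int[P]_(x in Q (k, j)) (X (madd (of_box k) (unitv j)) x)%:E)%E.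
  by apply: eq_integral => w /set_mem[_ [-> ->]].
have -> : (\int[P]_(x in Q (k, j)) (X_ t x)%:E =
    \int[P]_(x in Q (k, j)) (X (of_box k) x)%:E)%E.
  by apply: eq_integral => w /set_mem[_ [_ ->]].
apply: (integral_le_of_cond_exp_le P (F_sub _) (X_int _) (X_int _)) (FQ (k, j)).
exact: X_le (mle_madd_unitv _ _).
Qed.

Hypothesis F_mono : forall r r', mle r r' -> F r `<=` F r'.

Lemma allocation_sigma_mono t u : (t <= u)%N ->
  stopped_sigma F (Tt t) `<=` stopped_sigma F (Tt u).
Proof.
move=> tu; apply: (stopped_sigma_mono F_sub (allocation_bounded t)) F_mono
  (allocation_stopping u) _ => w.
exact: allocation_mle.
Qed.

Lemma allocation_integral_le t u A : (t <= u)%N -> stopped_sigma F (Tt t) A ->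
  (\int[P]_(x in A) (X_ u x)%:E <= \int[P]_(x in A) (X_ t x)%:E)%E.
Proof.
move=> + FA; elim: u => [|u IH]; first by rewrite leqn0 => /eqP->.
rewrite leq_eqVlt ltnS => /predU1P[-> //|tu].
apply: le_trans (IH tu); apply: allocation_step_integral.
exact: allocation_sigma_mono tu _ FA.
Qed.

End allocation.

Theorem proposition6p11 (dT : measure_display) (T : measurableType dT) (R : realType)
  (P : probability T R) (d : nat) (F : mindex d -> set (set T))
  (X : mindex d -> T -> R) (s : mindex d) (Tt : nat -> T -> mindex d) :
  measure_is_complete P ->
  mfiltration P F ->
  supermartingale P (@mle d) F X ->
  allocation F s Tt ->
  supermartingale P (fun t u : nat => (t <= u)%N)
    (fun t => stopped_sigma F (Tt t)) (fun t w => X (Tt t w) w).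
Proof.
move=> _ [F_sub F_mono _ _] X_super T_alloc.
have [X_int X_wrt _] := X_super.
have Tt_bounded := allocation_bounded T_alloc.
have Tt_stopping := allocation_stopping T_alloc F_sub.
have X_wrt_stopped t := measurable_wrt_stopped F_sub (Tt_stopping t) X X_wrt.
have X_int_stopped t :=
  integrable_stopped P F_sub (Tt_bounded t) (Tt_stopping t) X X_wrt X_int.
split => // t u tu Z [FZ Z_int ZE].
have F_sub_stopped :=
  sub_sigma_algebra_stopped F_sub (Tt_bounded t) (Tt_stopping t).
apply: (ae_le_of_integral_le P F_sub_stopped FZ (X_wrt_stopped t) Z_int
  (X_int_stopped t)).
move=> A FA; rewrite ZE //.
exact (allocation_integral_le P T_alloc F_sub X X_super F_mono _ _ _ tu FA).
Qed.
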